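(* Let $X$ be a real Banach space, $Y$ a (closed linear) subspace of $X$, $N\in\mathbb{N}$, and $f:[0,\infty)^N\to[0,\infty)$ a convex monotone function. Then the map $\mathrm{rad}_Y^f:(\mathcal{F}_N(X),d)\to[0,\infty)$ is Lipschitz continuous on bounded subsets of $\mathcal{F}_N(X)$.
   Context: $\mathcal{F}_N(X)$ is the set of subsets of $X$ of cardinality $N$, each written (with a fixed enumeration) as $\{x_1,\dots,x_N\}$, with the metric $d(F_1,F_2)=\max_{1\le i\le N}\|x_i-x_i'\|$ for $F_1=\{x_1,\dots,x_N\}$, $F_2=\{x_1',\dots,x_N'\}$. $f$ is monotone if $a\le b$ coordinatewise implies $f(a)\le f(b)$. For $F=\{x_1,\dots,x_N\}$, $r_f(y,F)=f(\|y-x_1\|,\dots,\|y-x_N\|)$ and $\mathrm{rad}_Y^f(F)=\inf_{y\in Y}r_f(y,F)$. *)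

From HB Require Import structures.
From mathcomp Require Import all_boot all_order all_algebra.
From mathcomp Require Import all_classical all_reals all_analysis.
Set Implicit Arguments. Unset Strict Implicit. Unset Printing Implicit Defensive.
Import Order.TTheory GRing.Theory Num.Theory.
Import numFieldNormedType.Exports.
Local Open Scope classical_set_scope.
Local Open Scope ring_scope.

(* An element of F_N(X): an N-element subset of X with its fixed enumeration,
   i.e. an injective map 'I_N -> X. *)
Definition FN (R : realType) (X : normedModType R) (N : nat) : Type :=
  {F : 'I_N -> X | injective F}.

Definition dFN (R : realType) (X : normedModType R) (N : nat)
  (F1 F2 : FN X N) : R :=
  \big[Num.max/0]_(i < N) `|proj1_sig F1 i - proj1_sig F2 i|.

Definition closed_subspace (R : realType) (X : normedModType R) (Y : set X) : Prop :=
  closed Y /\ Y 0 /\ (forall (a : R) (x y : X), Y x -> Y y -> Y (a *: x + y)).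

Definition nonneg_vec (R : realType) (N : nat) (a : 'I_N -> R) : Prop :=
  forall i, 0 <= a i.

Definition nonneg_valued (R : realType) (N : nat) (f : ('I_N -> R) -> R) : Prop :=
  forall a, nonneg_vec a -> 0 <= f a.

Definition convex_on_orthant (R : realType) (N : nat) (f : ('I_N -> R) -> R) : Prop :=
  forall a b (t : R), nonneg_vec a -> nonneg_vec b -> 0 <= t <= 1 ->
    f (fun i => t * a i + (1 - t) * b i) <= t * f a + (1 - t) * f b.

Definition monotone_on_orthant (R : realType) (N : nat) (f : ('I_N -> R) -> R) : Prop :=
  forall a b, nonneg_vec a -> nonneg_vec b -> (forall i, a i <= b i) -> f a <= f b.

Definition r_f (R : realType) (X : normedModType R) (N : nat)
  (f : ('I_N -> R) -> R) (y : X) (F : FN X N) : R :=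
  f (fun i => `|y - proj1_sig F i|).

Definition radYf (R : realType) (X : normedModType R) (N : nat)
  (f : ('I_N -> R) -> R) (Y : set X) (F : FN X N) : R :=
  inf [set r_f f y F | y in Y].

Definition bounded_FN (R : realType) (X : normedModType R) (N : nat)
  (B : set (FN X N)) : Prop :=
  exists (F0 : FN X N) (M : R), forall F, B F -> dFN F F0 <= M.

From HB Require Import structures.
From mathcomp Require Import all_boot all_order all_algebra.
From mathcomp Require Import all_classical all_reals all_analysis.
From mathcomp Require Import lra.
Import Order.TTheory GRing.Theory Num.Theory.
Import numFieldNormedType.Exports.
Local Open Scope classical_set_scope.
Local Open Scope ring_scope.

(* On a bounded family all points have norm at most r, so every radius is at most
   f(r,...,r) =: c - 1.  Let d := d(F1,F2) <= 1 and let y in Y be a near-optimal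
   centre for F2 with distance vector a.  The distances from y to F1 are bounded by
   a + d = d (a + 1) + (1 - d) a, so convexity and monotonicity give
   rad F1 <= rad F2 + d f(a + 1).  The factor f(a + 1) is bounded uniformly: either
   f exceeds c somewhere on the diagonal, and then f a <= c confines a to a bounded
   box, or f never exceeds c on the diagonal.  Pairs with d > 1 are handled by the
   bound c on the radii. *)

Section OrthantFunctions.
Context {R : realType} {N : nat} {f : ('I_N -> R) -> R}.
Hypotheses (f_ge0 : nonneg_valued f) (f_mono : monotone_on_orthant f).

Lemma monotone_orthant_le (a b : 'I_N -> R) :
  nonneg_vec a -> (forall i, a i <= b i) -> f a <= f b.
Proof. by move=> a0 ab; apply: f_mono => // i; apply: le_trans (a0 i) (ab i). Qed.

Lemma convex_monotone_shift (a b : 'I_N -> R) (t : R) :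
  convex_on_orthant f -> nonneg_vec a -> nonneg_vec b -> 0 <= t <= 1 ->
  (forall i, b i <= a i + t) -> f b <= f a + t * f (fun i => a i + 1).
Proof.
move=> f_conv a0 b0 t01 ba; have /andP[t0 t1] := t01.
have a1 : nonneg_vec (fun i => a i + 1) by move=> i; have := a0 i; lra.
have fb : f b <= f (fun i => t * (a i + 1) + (1 - t) * a i).
  by apply: f_mono => // i; [have := a0 i; nra | have := ba i; lra].
have := f_conv _ _ t a1 a0 t01.
have : 0 <= t * f a by apply/mulr_ge0/f_ge0.
lra.
Qed.

Lemma sublevel_shift_bounded (c s : R) : 0 <= c -> 0 <= s ->
  exists2 C, 0 <= C & forall a, nonneg_vec a -> f a <= c ->
    (forall i j, a i <= a j + s) -> f (fun i => a i + 1) <= C.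
Proof.
move=> c0 s0.
have [[T T0 cT]|] := pselect (exists2 T, 0 <= T & c < f (fun=> T)).
  exists (f (fun=> T + s + 1)); first by apply: f_ge0 => i; lra.
  move=> a a0 fa spread; apply: monotone_orthant_le => [i|i].
    by have := a0 i; lra.
  rewrite lerD2r leNgt; apply/negP => aiT.
  suff : f (fun=> T) <= f a by lra.
  by apply: f_mono => // j; have := spread i j; lra.
move=> /forall2NP below; exists c => // a a0 fa _.
set M := \big[Num.max/0]_i a i.
have M0 : 0 <= M by elim/big_ind: M => // x y; rewrite le_max => ->.
apply: le_trans (_ : f (fun=> M + 1) <= c).
  apply: monotone_orthant_le => [i|i]; first by have := a0 i; lra.
  by rewrite lerD2r; apply: (le_bigmax _ a).
case: (below (M + 1)) => [M1|/negP]; last by rewrite -leNgt.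
by exfalso; apply: M1; lra.
Qed.

End OrthantFunctions.

Section Distance.
Context {R : realType} {X : normedModType R} {N : nat}.
Implicit Types F : FN X N.

Lemma le_dFN F1 F2 i : `|proj1_sig F1 i - proj1_sig F2 i| <= dFN F1 F2.
Proof. exact: (le_bigmax _ (fun i => `|proj1_sig F1 i - proj1_sig F2 i|)). Qed.

Lemma dFN_ge0 F1 F2 : 0 <= dFN F1 F2.
Proof. by rewrite /dFN; elim/big_ind: _ => // x y; rewrite le_max => ->. Qed.

Lemma dFNC F1 F2 : dFN F1 F2 = dFN F2 F1.
Proof. by apply: eq_bigr => i _; apply: distrC. Qed.

Lemma ler_dist_ball (y u v : X) (r : R) : `|u| <= r -> `|v| <= r ->
  `|y - u| <= `|y - v| + (r + r).
Proof.
move=> ur vr; have := ler_distD v y u; have := ler_distD 0 v u.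
by rewrite sub0r normrN subr0; lra.
Qed.

Lemma bounded_FN_norm (B : set (FN X N)) : bounded_FN B ->
  exists2 r, 0 <= r & forall F i, B F -> `|proj1_sig F i| <= r.
Proof.
move=> [F0 [M BM]]; exists (`|M| + \big[Num.max/0]_i `|proj1_sig F0 i|).
  by rewrite addr_ge0 //; elim/big_ind: _ => // x y; rewrite le_max => ->.
move=> F i BF; have := ler_distD (proj1_sig F0 i) (proj1_sig F i) 0.
rewrite !subr0; have := le_bigmax 0 (fun i => `|proj1_sig F0 i|) i.
have := le_dFN F F0 i; have := BM F BF; have := ler_norm M; lra.
Qed.

End Distance.

Section Radius.
Context {R : realType} {X : normedModType R} {N : nat}.
Context {f : ('I_N -> R) -> R} {Y : set X}.
Hypotheses (f_ge0 : nonneg_valued f) (Y0 : Y 0).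
Implicit Types F : FN X N.

Let r_f_ge0 F : lbound [set r_f f y F | y in Y] 0.
Proof. by move=> _ [y _ <-]; apply: f_ge0. Qed.

Let r_f_has_inf F : has_inf [set r_f f y F | y in Y].
Proof. by split; [exists (r_f f 0 F), 0 | exists 0; apply: r_f_ge0]. Qed.

Lemma radYf_ge0 F : 0 <= radYf f Y F.
Proof. exact: lb_le_inf (r_f_has_inf F).1 (r_f_ge0 F). Qed.

Lemma radYf_le F y : Y y -> radYf f Y F <= r_f f y F.
Proof. by move=> Yy; apply: ge_inf; [exact: (r_f_has_inf F).2 | exists y]. Qed.

Lemma radYf_adherent F eps : 0 < eps ->
  exists2 y, Y y & r_f f y F < radYf f Y F + eps.
Proof.
move=> eps0; have [_ [y Yy <-]] := inf_adherent eps0 (r_f_has_inf F).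
by exists y.
Qed.

Lemma radYf_le_diag F r : monotone_on_orthant f ->
  (forall i, `|proj1_sig F i| <= r) -> radYf f Y F <= f (fun=> r).
Proof.
move=> f_mono Fr; apply: le_trans (radYf_le F 0 Y0) _.
by apply: monotone_orthant_le => // i; rewrite sub0r normrN.
Qed.

Lemma radYf_le_shift F1 F2 C :
  convex_on_orthant f -> monotone_on_orthant f -> dFN F1 F2 <= 1 ->
  (forall y, Y y -> r_f f y F2 <= radYf f Y F2 + 1 ->
     f (fun i => `|y - proj1_sig F2 i| + 1) <= C) ->
  radYf f Y F1 <= radYf f Y F2 + C * dFN F1 F2.
Proof.
move=> f_conv f_mono d1 HC; apply/ler_addgt0Pr => eps eps0.
have e0 : 0 < Num.min eps 1 by rewrite lt_min eps0 ltr01.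
have [y Yy ry] := radYf_adherent F2 _ e0.
have e1 : Num.min eps 1 <= eps by rewrite ge_min lexx.
have ry1 : r_f f y F2 <= radYf f Y F2 + 1.
  by apply/ltW/(lt_le_trans ry); rewrite lerD2l ge_min lexx orbT.
have shift : r_f f y F1 <= r_f f y F2 + dFN F1 F2 *
    f (fun i => `|y - proj1_sig F2 i| + 1).
  apply: convex_monotone_shift => //; first by rewrite dFN_ge0 d1.
  move=> i; have := ler_distD (proj1_sig F2 i) y (proj1_sig F1 i).
  by have := le_dFN F2 F1 i; rewrite dFNC; lra.
have := ler_wpM2l (dFN_ge0 F1 F2) (HC y Yy ry1).
have := radYf_le F1 y Yy; lra.
Qed.

End Radius.

Theorem proposition4p3 (R : realType) (X : completeNormedModType R)
  (Y : set X) (N : nat) (f : ('I_N -> R) -> R) :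
  closed_subspace Y ->
  nonneg_valued f -> convex_on_orthant f -> monotone_on_orthant f ->
  forall B : set (FN X N), bounded_FN B ->
  exists L : R, forall F1 F2 : FN X N, B F1 -> B F2 ->
    `|radYf f Y F1 - radYf f Y F2| <= L * dFN F1 F2.
Proof.
move=> [_ [Y0 _]] f_ge0 f_conv f_mono B /bounded_FN_norm[r r0 Br].
set c := f (fun=> r) + 1.
have c0 : 0 <= c by rewrite addr_ge0 // f_ge0.
have rad_le_c F : B F -> radYf f Y F <= c - 1.
  by move=> BF; rewrite addrK (radYf_le_diag f_ge0 Y0) // => i; apply: Br.
have [C C0 HC] := sublevel_shift_bounded f_ge0 f_mono _ _ c0 (addr_ge0 r0 r0).
have one_sided F1 F2 : B F1 -> B F2 ->
    radYf f Y F1 <= radYf f Y F2 + (c + C) * dFN F1 F2.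
  move=> B1 B2; have d0 := dFN_ge0 F1 F2; have rad0 := radYf_ge0 f_ge0 Y0 F2.
  case: (leP (dFN F1 F2) 1) => d1; last first.
    rewrite mulrDl; have := rad_le_c F1 B1.
    have : c <= c * dFN F1 F2 by rewrite ler_peMr // ltW.
    have : 0 <= C * dFN F1 F2 by apply: mulr_ge0.
    lra.
  apply: le_trans (radYf_le_shift f_ge0 Y0 _ _ C f_conv f_mono d1 _) _.
  - move=> y Yy ry; apply: HC => [i||i j]; first exact: normr_ge0.
    + by move: ry; rewrite /r_f; have := rad_le_c F2 B2; lra.
    + by apply: ler_dist_ball; apply: Br.
  - by rewrite lerD2l ler_wpM2r // lerDr.
exists (c + C) => F1 F2 B1 B2; rewrite ler_norml.
have := one_sided F1 F2 B1 B2; have := one_sided F2 F1 B2 B1.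
by rewrite dFNC => h1 h2; apply/andP; split; lra.
Qed.
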